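(* Let $t,k,n$ be positive integers with $2\le t\le k\le n$. Then there exists a left-compressed non-trivial $t$-intersecting family $\mathcal F\subseteq\binom{[n]}{k}$ whose codegree squared sum ${\rm co}_2(\mathcal F)$ is maximum among all non-trivial $t$-intersecting subfamilies of $\binom{[n]}{k}$.
   Context: A family is $t$-intersecting if any two members share at least $t$ elements; it is trivial if all members share $t$ common elements, non-trivial otherwise. ${\rm co}_2(\mathcal F)=\sum_{E\in\binom{[n]}{k-1}}d(E)^2$ with $d(E)=|\{F\in\mathcal F:E\subseteq F\}|$. Shift: $\delta_{ij}(A)=(A\setminus\{j\})\cup\{i\}$ if $j\in A$, $i\notin A$, $(A\setminus\{j\})\cup\{i\}\notin\mathcal F$, else $\delta_{ij}(A)=A$; $\Delta_{ij}(\mathcal F)=\{\delta_{ij}(A):A\in\mathcal F\}$; $\mathcal F$ is left-compressed if $\Delta_{ij}(\mathcal F)=\mathcal F$ for all $1\le i<j\le n$. *)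

(* Ground set [n] is 'I_n (elements 0..n-1, ordered as naturals). *)
From mathcomp Require Import all_boot.
Set Implicit Arguments. Unset Strict Implicit. Unset Printing Implicit Defensive.

Section Defs.
Variable n : nat.
Local Notation fam := {set {set 'I_n}}.

Definition k_uniform (k : nat) (F : fam) : Prop :=
  forall A, A \in F -> #|A| = k.

Definition t_intersecting (t : nat) (F : fam) : Prop :=
  forall A B, A \in F -> B \in F -> t <= #|A :&: B|.

Definition trivial_fam (t : nat) (F : fam) : Prop :=
  exists T : {set 'I_n}, #|T| = t /\ forall A, A \in F -> T \subset A.

Definition nontrivial_fam (t : nat) (F : fam) : Prop := ~ trivial_fam t F.

Definition codeg (F : fam) (E : {set 'I_n}) : nat := #|[set A in F | E \subset A]|.

Definition co2 (k : nat) (F : fam) : nat :=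
  \sum_(E : {set 'I_n} | #|E| == k.-1) codeg F E ^ 2.

Definition shift_set (F : fam) (i j : 'I_n) (A : {set 'I_n}) : {set 'I_n} :=
  if [&& j \in A, i \notin A & ((A :\ j) :|: [set i]) \notin F]
  then (A :\ j) :|: [set i] else A.

Definition shift_fam (F : fam) (i j : 'I_n) : fam :=
  [set shift_set F i j A | A in F].

Definition left_compressed (F : fam) : Prop :=
  forall i j : 'I_n, i < j -> shift_fam F i j = F.

End Defs.

From mathcomp Require Import all_boot perm zify.
From Stdlib Require Import Classical.
Set Implicit Arguments. Unset Strict Implicit. Unset Printing Implicit Defensive.

(* Among the non-trivial t-intersecting k-uniform families choose F with maximum
   co2 and, subject to that, with minimum total weight sum_{A in F} sum_{x in A} x.
   A shift S_ij (i < j) preserves uniformity and t-intersection, never decreases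
   co2 (for each (k-1)-set E, the codegrees of E and of its (i j)-transpose keep
   their sum and become more unbalanced) and strictly decreases the weight when it
   moves something. Hence every shift S_ij(F) <> F is trivial; moreover, by
   maximality, F contains every k-set meeting all its members in >= t points.
   Suppose S_ij(F) <> F has kernel T; then i is in T, j is not, and with
   U = T + j every k-superset of U lies in F. Take members A (i in A, j not) and
   C (j in C, i not) of minimum weight: since the other shifts fix F, both A \ U and
   C \ U are initial segments of [n] \ U of size k - t, so they coincide. A member B
   witnessing that C - j + i is not in F then meets A in at most t - 1 points. *)

Lemma leq_sum_sqr_spread a b c d : a + b = c + d -> a <= c -> a <= d ->
  c ^ 2 + d ^ 2 <= a ^ 2 + b ^ 2.
Proof. nia. Qed.

Lemma exists_argmin (T : Type) (P : T -> Prop) (mu : T -> nat) :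
  (exists x, P x) -> exists x, P x /\ forall y, P y -> mu x <= mu y.
Proof.
case=> x Px; move: {2}(mu x) (leqnn (mu x)) => m; elim: m x Px => [|m IH] x Px le_xm.
  by exists x; split=> // y _; move: le_xm; rewrite leqn0 => /eqP ->.
have [[y [Py lt_yx]]|nolt] := classic (exists y, P y /\ mu y < mu x).
  by apply: (IH y Py); rewrite -ltnS (leq_trans lt_yx le_xm).
exists x; split=> // y Py; rewrite leqNgt; apply/negP => lt_yx; apply: nolt; by exists y.
Qed.

Lemma exists_argmax (T : Type) (P : T -> Prop) (mu : T -> nat) (b : nat) :
  (forall x, mu x <= b) -> (exists x, P x) ->
  exists x, P x /\ forall y, P y -> mu y <= mu x.
Proof.
move=> le_b /(exists_argmin (fun x => b - mu x)) [x [Px min_x]].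
by exists x; split=> // y /min_x; have := le_b x; have := le_b y; lia.
Qed.

Lemma eq_setD_initial n (U Z1 Z2 : {set 'I_n}) : #|Z1 :\: U| = #|Z2 :\: U| ->
  (forall x y, y \in Z1 :\: U -> x \notin Z1 :|: U -> y < x) ->
  (forall x y, y \in Z2 :\: U -> x \notin Z2 :|: U -> y < x) ->
  Z1 :\: U = Z2 :\: U.
Proof.
move=> eq_card init1 init2; apply/eqP; rewrite eqEcard eq_card leqnn andbT.
apply/subsetP => z zZ1; apply/negPn/negP => zZ2.
have /subsetPn [w wZ2 wZ1] : ~~ (Z2 :\: U \subset Z1 :\: U).
  apply: contra zZ2 => sub21; suff -> : Z2 :\: U = Z1 :\: U by [].
  by apply/eqP; rewrite eqEcard sub21 eq_card /=.
have notin_Z1 : w \notin Z1 :|: U.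
  by case/setDP: wZ2 => _ wU; rewrite inE negb_or wU andbT; apply: contra wZ1 => ?; apply/setDP.
have notin_Z2 : z \notin Z2 :|: U.
  by case/setDP: zZ1 => _ zU; rewrite inE negb_or zU andbT; apply: contra zZ2 => ?; apply/setDP.
by have := init1 _ _ zZ1 notin_Z1; have := init2 _ _ wZ2 notin_Z2; lia.
Qed.

Section Exchange.
Variable n : nat.
Implicit Types (i j x : 'I_n) (A B E : {set 'I_n}).

Definition exch i j A := A :\ j :|: [set i].

Definition weight A := \sum_(x in A) (x : nat).

Definition weight_fam (G : {set {set 'I_n}}) := \sum_(A in G) weight A.

Lemma in_exch i j A x : (x \in exch i j A) = (x == i) || (x != j) && (x \in A).
Proof. by rewrite !inE orbC. Qed.

Lemma card_setI_sum A B : #|A :&: B| = \sum_(x in A) (x \in B).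
Proof.
rewrite -sum1_card (eq_bigl (fun x => (x \in A) && (x \in B))) => [|x]; last by rewrite inE.
by rewrite big_mkcondr; apply: eq_bigr => x _; case: (x \in B).
Qed.

Variables (i j : 'I_n).

Lemma mem_exch_i A : i \in exch i j A.
Proof. by rewrite in_exch eqxx. Qed.

Section Moved.
Variable A : {set 'I_n}.
Hypotheses (jA : j \in A) (iA : i \notin A).

Lemma sum_exch (f : 'I_n -> nat) :
  \sum_(x in exch i j A) f x + f j = \sum_(x in A) f x + f i.
Proof.
rewrite /exch setUC big_setU1 /=; last by rewrite !inE (negbTE iA) andbF.
by rewrite (big_setD1 j jA) /= addnC addnA addnAC.
Qed.

Lemma card_exchI B : #|exch i j A :&: B| + (j \in B) = #|A :&: B| + (i \in B).
Proof. by rewrite !card_setI_sum sum_exch. Qed.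

Lemma leq_card_exchI B : (j \in B) ==> (i \in B) ->
  #|A :&: B| <= #|exch i j A :&: B|.
Proof. by have := card_exchI B; case: (j \in B); case: (i \in B) => //=; lia. Qed.

Lemma card_exch : #|exch i j A| = #|A|.
Proof. by have /eqP := card_exchI setT; rewrite !setIT !in_setT eqn_add2r => /eqP. Qed.

Lemma weight_exch : weight (exch i j A) + j = weight A + i.
Proof. exact: sum_exch. Qed.

Lemma subset_exch E : j \in E -> i \notin E ->
  (exch i j E \subset exch i j A) = (E \subset A).
Proof.
move=> jE iE; apply/subsetP/subsetP => sub x.
- move=> xE; case: (eqVneq x j) => [-> //|xj].
  have /sub : x \in exch i j E by rewrite in_exch xj xE orbT.
  by rewrite in_exch xj => /orP [/eqP xi|//]; rewrite -xi xE in iE.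
- by rewrite !in_exch => /orP [-> //|/andP [-> /sub ->]]; rewrite orbT.
Qed.

End Moved.

Lemma exchI A B : exch i j A :&: exch i j B = exch i j (A :&: B).
Proof. by rewrite /exch -setUIl setDIl. Qed.

Lemma exchIC A B : i \notin A -> i \notin B -> exch i j A :&: B = A :&: exch i j B.
Proof.
move=> iA iB; apply/setP => x; rewrite !inE.
case: (eqVneq x i) => [->|_]; first by rewrite (negbTE iA) (negbTE iB) !andbF.
by rewrite !orbF andbCA andbA.
Qed.

Lemma subset_exchr E A : i \notin E -> j \notin E ->
  (E \subset exch i j A) = (E \subset A).
Proof.
move=> iE jE.
have memE x : x \in E -> (x \in exch i j A) = (x \in A).
  move=> xE; have [xi xj] : x != i /\ x != j.
    by split; [apply: contraNneq iE | apply: contraNneq jE] => <-.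
  by rewrite in_exch (negbTE xi) xj.
by apply/subsetP/subsetP => sub x xE; [rewrite -memE | rewrite memE] => //; apply: sub.
Qed.

Lemma exch_inj A B : j \in A -> j \in B -> i \notin A -> i \notin B ->
  exch i j A = exch i j B -> A = B.
Proof.
move=> jA jB iA iB /setP eAB; apply/setP => x; have := eAB x; rewrite !in_exch.
case: (eqVneq x i) => [->|_]; first by rewrite (negbTE iA) (negbTE iB).
by case: (eqVneq x j) => [->|_]; rewrite ?jA ?jB.
Qed.

Hypothesis neq_ij : i != j.

Lemma notin_exch_j A : j \notin exch i j A.
Proof. by rewrite in_exch eqxx andFb orbF eq_sym. Qed.

Lemma preimset_tpermK E : tperm i j @^-1: (tperm i j @^-1: E) = E.
Proof. by apply/setP => x; rewrite !inE tpermK. Qed.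

Lemma preimset_tperm_exch E : j \in E -> i \notin E -> tperm i j @^-1: E = exch i j E.
Proof.
move=> jE iE; apply/setP => x; rewrite inE in_exch.
case: tpermP => [->|->|/eqP/negbTE -> /eqP -> //]; first by rewrite eqxx.
by rewrite eq_sym (negbTE neq_ij) eqxx (negbTE iE).
Qed.

Lemma preimset_tperm_id E : (i \in E) = (j \in E) -> tperm i j @^-1: E = E.
Proof. by move=> ijE; apply/setP => x; rewrite inE; case: tpermP => [->|->|]. Qed.

End Exchange.

Section Shift.
Variables (n : nat) (F : {set {set 'I_n}}) (i j : 'I_n).
Hypothesis neq_ij : i != j.
Implicit Types (A B E T : {set 'I_n}).

Local Notation shift := (shift_set F i j).
Local Notation shiftF := (shift_fam F i j).

Definition moved A := [&& j \in A, i \notin A & exch i j A \notin F].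

Lemma shift_setE A : shift A = if moved A then exch i j A else A.
Proof. by []. Qed.

Lemma mem_shift_fam A : A \in F -> shift A \in shiftF.
Proof. exact: imset_f. Qed.

Lemma shift_set_inj : {in F &, injective shift}.
Proof.
move=> A B AF BF; rewrite !shift_setE.
case mA: (moved A); case mB: (moved B) => //.
- by move: mA mB => /and3P [jA iA _] /and3P [jB iB _]; apply: exch_inj.
- by move: mA => /and3P [_ _ nF] eAB; rewrite eAB BF in nF.
- by move: mB => /and3P [_ _ nF] eAB; rewrite -eAB AF in nF.
Qed.

Lemma card_shift_fam_sub (P : pred {set 'I_n}) :
  {in F, forall A, P (shift A) = P A} ->
  #|[set B in shiftF | P B]| = #|[set A in F | P A]|.
Proof.
move=> Pshift; have -> : [set B in shiftF | P B] = shift @: [set A in F | P A].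
  apply/setP => B; rewrite inE; apply/andP/imsetP.
  - by case=> /imsetP [A AF ->] PB; exists A; rewrite // inE AF -Pshift.
  - by case=> A /setIdP [AF PA] ->; rewrite mem_shift_fam // Pshift.
by apply: card_in_imset => A B /setIdP [AF _] /setIdP [BF _]; apply: shift_set_inj.
Qed.

Lemma shift_fam_uniform k : k_uniform k F -> k_uniform k shiftF.
Proof.
move=> kF _ /imsetP [A AF ->]; rewrite shift_setE.
case mA: (moved A); last exact: kF.
by case/and3P: mA => jA iA _; rewrite card_exch //; apply: kF.
Qed.

Lemma shift_fam_intersecting t : t_intersecting t F -> t_intersecting t shiftF.
Proof.
move=> tF.
have tFexch A B : A \in F -> B \in F -> moved A -> ~~ moved B ->
    t <= #|exch i j A :&: B|.
  move=> AF BF /and3P [jA iA _] mB.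
  case: (boolP ((j \in B) ==> (i \in B))) => [jiB|].
    exact: leq_trans (tF _ _ AF BF) (leq_card_exchI jA iA jiB).
  rewrite negb_imply => /andP [jB iB].
  have exchBF : exch i j B \in F by move: mB; rewrite /moved jB iB negbK.
  by rewrite exchIC //; apply: tF.
move=> _ _ /imsetP [A AF ->] /imsetP [B BF ->]; rewrite !shift_setE.
case mA: (moved A); case mB: (moved B).
- move: mA mB => /and3P [jA iA _] /and3P [jB iB _].
  by rewrite exchI card_exch ?inE ?jA ?jB ?(negbTE iA) //; apply: tF.
- by apply: tFexch; rewrite ?mB.
- by rewrite setIC; apply: tFexch; rewrite ?mA.
- exact: tF.
Qed.

Lemma shift_famPn : shiftF != F -> exists2 A, A \in F & moved A.
Proof.
move=> neFF; apply/exists_inP; apply: contraNT neFF; rewrite negb_exists_in => /forall_inP unmoved.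
apply/eqP; rewrite -[RHS]imset_id; apply: eq_in_imset => A /unmoved.
by rewrite /= shift_setE => /negbTE ->.
Qed.

Lemma weight_shift_fam : i < j -> shiftF != F -> weight_fam shiftF < weight_fam F.
Proof.
move=> lt_ij /shift_famPn [A0 A0F mA0]; rewrite /weight_fam big_imset; last exact: shift_set_inj.
have lt_moved A : moved A -> weight (exch i j A) < weight A.
  by case/and3P => jA iA _; have := weight_exch jA iA; lia.
rewrite (bigD1 A0 A0F) [X in _ < X](bigD1 A0 A0F) /= -addSn shift_setE mA0.
apply: leq_add; first exact: lt_moved.
apply: leq_sum => A _; rewrite shift_setE; case mA: (moved A) => //.
exact/ltnW/lt_moved.
Qed.

Lemma mem_shift_fam_j B : B \in shiftF -> j \in B -> (B \in F) && ~~ moved B.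
Proof.
case/imsetP => A AF ->; rewrite shift_setE; case mA: (moved A).
  by rewrite (negbTE (notin_exch_j neq_ij A)).
by rewrite /= AF mA.
Qed.

Lemma shift_fam_stable A : shiftF = F -> A \in F -> j \in A -> i \notin A ->
  exch i j A \in F.
Proof.
move=> eqFF AF jA iA; apply/negPn/negP => exchAF.
have := mem_shift_fam AF; rewrite eqFF shift_setE /moved jA iA exchAF /=.
by move=> exchAF'; rewrite exchAF' in exchAF.
Qed.

Lemma core_shift_fam T : {in shiftF, forall B, T \subset B} -> i \notin T ->
  {in F, forall A, T \subset A}.
Proof.
move=> coreT iT A AF; have := coreT _ (mem_shift_fam AF); rewrite shift_setE.
case: (moved A) => // /subsetP sub; apply/subsetP => x xT.
by have := sub x xT; rewrite in_exch => /orP [/eqP xi|/andP [_ //]]; rewrite -xi xT in iT.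
Qed.

Section CodegreeShift.
Variables (E : {set 'I_n}).
Hypotheses (jE : j \in E) (iE : i \notin E).

Lemma codeg_shift_fam_add :
  codeg shiftF E + codeg shiftF (exch i j E) = codeg F E + codeg F (exch i j E).
Proof.
have codeg_addUI G : codeg G E + codeg G (exch i j E) =
    #|[set A in G | (E \subset A) || (exch i j E \subset A)]| +
    #|[set A in G | (E \subset A) && (exch i j E \subset A)]|.
  rewrite /codeg -cardsUI; congr (_ + _); apply: eq_card => A; rewrite !inE;
  by case: (A \in G); case: (E \subset A).
have moved_sub A : moved A -> [/\ (E \subset exch i j A) = false,
    (exch i j E \subset A) = false & (exch i j E \subset exch i j A) = (E \subset A)].
  case/and3P=> jA iA _; split; last exact: subset_exch.
  - by apply: contraTF (notin_exch_j neq_ij A) => /subsetP sub; rewrite negbK sub.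
  - by apply: contraTF iA => /subsetP sub; rewrite negbK sub ?mem_exch_i.
rewrite !codeg_addUI !card_shift_fam_sub // => A _; rewrite shift_setE;
by case: ifP => // /moved_sub [-> -> ->]; rewrite ?orbF ?andbF.
Qed.

Lemma codeg_shift_fam_le : codeg shiftF E <= codeg F E.
Proof.
apply: subset_leq_card; apply/subsetP => B; rewrite !inE => /andP [BF' EB].
by have /andP [-> _] := mem_shift_fam_j BF' (subsetP EB j jE).
Qed.

Lemma codeg_shift_fam_le_exch : codeg shiftF E <= codeg F (exch i j E).
Proof.
(* [back] injects the members of shiftF above E into the members of F above exch i j E. *)
pose back B := if i \in B then B else exch i j B.
have jB B : B \in [set B in shiftF | E \subset B] -> j \in B.
  by rewrite inE => /andP [_ /subsetP]; apply.
rewrite /codeg -(card_in_imset (f := back)).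
  apply: subset_leq_card; apply/subsetP => _ /imsetP [B BE ->].
  have /andP [BF mB] := mem_shift_fam_j (setIdP BE).1 (jB B BE).
  have EB := (setIdP BE).2; rewrite /back inE; case: ifP => iB.
    by rewrite BF; apply/subsetP => x; rewrite in_exch => /orP [/eqP -> //|/andP [_ /(subsetP EB)]].
  by move: mB; rewrite /moved (jB B BE) iB negbK => ->; rewrite subset_exch ?iB ?(jB B BE).
move=> B1 B2 B1E B2E; rewrite /back.
have [jB1 jB2] := (jB B1 B1E, jB B2 B2E).
case: ifP => iB1; case: ifP => iB2 // eqB.
- by rewrite eqB (negbTE (notin_exch_j neq_ij B2)) in jB1.
- by rewrite -eqB (negbTE (notin_exch_j neq_ij B1)) in jB2.
- by apply: exch_inj eqB; rewrite ?iB1 ?iB2.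
Qed.

End CodegreeShift.

Lemma codeg_shift_fam_eq E : (i \in E) = (j \in E) -> codeg shiftF E = codeg F E.
Proof.
move=> ijE; rewrite /codeg card_shift_fam_sub // => A AF; rewrite shift_setE.
case mA: (moved A) => //; case/and3P: mA => jA iA _.
have [jE|njE] := boolP (j \in E); last by rewrite subset_exchr // ijE.
have -> : (E \subset A) = false.
  by apply: contraTF iA => /subsetP sub; rewrite negbK sub // ijE.
by apply: contraTF (notin_exch_j neq_ij A) => /subsetP sub; rewrite negbK sub.
Qed.

Lemma codeg_sqr_shift_fam E :
  codeg F E ^ 2 + codeg F (tperm i j @^-1: E) ^ 2 <=
  codeg shiftF E ^ 2 + codeg shiftF (tperm i j @^-1: E) ^ 2.
Proof.
have exch_case E' : j \in E' -> i \notin E' ->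
    codeg F E' ^ 2 + codeg F (tperm i j @^-1: E') ^ 2 <=
    codeg shiftF E' ^ 2 + codeg shiftF (tperm i j @^-1: E') ^ 2.
  move=> jE' iE'; rewrite preimset_tperm_exch //; apply: leq_sum_sqr_spread.
  - exact: codeg_shift_fam_add.
  - exact: codeg_shift_fam_le.
  - exact: codeg_shift_fam_le_exch.
have [/andP [jE iE]|jiE] := boolP ((j \in E) && (i \notin E)); first exact: exch_case.
have [/andP [iE jE]|ijE] := boolP ((i \in E) && (j \notin E)).
  have := exch_case (tperm i j @^-1: E); rewrite !inE tpermL tpermR preimset_tpermK.
  by rewrite addnC [X in _ <= X]addnC; apply.
have eqE : (i \in E) = (j \in E) by move: jiE ijE; do 2 case: (_ \in E).
by rewrite preimset_tperm_id // !codeg_shift_fam_eq.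
Qed.

Lemma co2_shift_fam k : co2 k F <= co2 k shiftF.
Proof.
have co2_double G : (co2 k G).*2 = \sum_(E : {set 'I_n} | #|E| == k.-1)
    (codeg G E ^ 2 + codeg G (tperm i j @^-1: E) ^ 2).
  rewrite big_split /= -addnn; congr (_ + _).
  pose swap E : {set 'I_n} := tperm i j @^-1: E.
  rewrite /co2 (reindex_inj (can_inj (f := swap) (g := swap) (preimset_tpermK i j))) /=.
  by apply: eq_bigl => E; rewrite card_preimset //; apply: perm_inj.
by rewrite -leq_double !co2_double; apply: leq_sum => E _; apply: codeg_sqr_shift_fam.
Qed.

End Shift.

Section Families.
Variable n : nat.
Implicit Types (F G : {set {set 'I_n}}) (D E : {set 'I_n}).

Lemma codeg_subset F G E : F \subset G -> codeg F E <= codeg G E.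
Proof.
move=> /subsetP sFG; apply: subset_leq_card; apply/subsetP => A.
by rewrite !inE => /andP [/sFG -> ->].
Qed.

Lemma co2_subset k F G : F \subset G -> co2 k F <= co2 k G.
Proof. by move=> sFG; apply: leq_sum => E _; rewrite leq_sqr codeg_subset. Qed.

Lemma co2_setU1 k F D : 0 < k -> #|D| = k -> D \notin F -> co2 k F < co2 k (D |: F).
Proof.
move=> k_gt0 cardD DnF; have /card_gt0P [x xD] : 0 < #|D| by rewrite cardD.
have cardDx : #|D :\ x| == k.-1 by rewrite -cardD (cardsD1 x D) xD.
have codegDx : codeg (D |: F) (D :\ x) = (codeg F (D :\ x)).+1.
  rewrite /codeg; have -> : [set A in D |: F | D :\ x \subset A] =
      D |: [set A in F | D :\ x \subset A].
    by apply/setP => A; rewrite !inE; case: eqP => [->|]; rewrite ?subD1set.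
  by rewrite cardsU1 inE (negbTE DnF).
rewrite /co2 (bigD1 _ cardDx) [X in _ < X](bigD1 _ cardDx) /= codegDx -addSn.
apply: leq_add; first by rewrite ltn_sqr.
by apply: leq_sum => E _; rewrite leq_sqr codeg_subset ?subsetUr.
Qed.

Lemma setU1_uniform k F D : k_uniform k F -> #|D| = k -> k_uniform k (D |: F).
Proof. by move=> kF cardD A /setU1P [->|/kF]. Qed.

Lemma setU1_intersecting t F D : t_intersecting t F -> t <= #|D| ->
  (forall B, B \in F -> t <= #|D :&: B|) -> t_intersecting t (D |: F).
Proof.
move=> tF tD tDF A B /setU1P [->|AF] /setU1P [->|BF].
- by rewrite setIid.
- exact: tDF.
- by rewrite setIC; apply: tDF.
- exact: tF.
Qed.

Lemma nontrivial_subset t F G : F \subset G -> nontrivial_fam t F -> nontrivial_fam t G.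
Proof.
move=> /subsetP sFG ntF [T [cardT coreT]]; apply: ntF; exists T; split=> // A AF.
exact/coreT/sFG.
Qed.

End Families.

Section Extremal.
Variables (n t k : nat) (F : {set {set 'I_n}}).
Hypotheses (kF : k_uniform k F) (tF : t_intersecting t F).
Hypothesis ntF : nontrivial_fam t F.
Hypothesis F_saturated : forall D : {set 'I_n}, #|D| = k ->
  (forall B, B \in F -> t <= #|D :&: B|) -> D \in F.
Hypothesis shift_trivial : forall x y : 'I_n, x < y ->
  shift_fam F x y != F -> trivial_fam t (shift_fam F x y).
Implicit Types (A B D T Z : {set 'I_n}) (x y : 'I_n).

Lemma mem_core_shift_fam x y T : shift_fam F x y != F -> #|T| = t ->
  {in shift_fam F x y, forall B, T \subset B} -> x \in T.
Proof.
move=> neFF cardT coreT; apply/negPn/negP => xT.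
by apply: ntF; exists T; split=> //; apply: core_shift_fam coreT xT.
Qed.

Lemma shift_fam_fixed_avoid x y D : x < y -> D \in F -> x \notin D -> y \notin D ->
  shift_fam F x y = F.
Proof.
move=> lt_xy DF xD yD; apply/eqP/negPn/negP => neFF.
have [T [cardT coreT]] := shift_trivial lt_xy neFF.
have DFxy : D \in shift_fam F x y.
  by have := mem_shift_fam x y DF; rewrite shift_setE /moved (negbTE yD).
have xT := mem_core_shift_fam neFF cardT coreT.
by have /subsetP/(_ x xT) := coreT _ DFxy; apply/negP.
Qed.

Section MinWeight.
Variables (U Z : {set 'I_n}) (a o : 'I_n).
Hypothesis U_saturated : forall D, #|D| = k -> U \subset D -> D \in F.
Hypotheses (ZF : Z \in F) (aZ : a \in Z) (oZ : o \notin Z) (aU : a \in U) (oU : o \in U).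
Hypothesis sub_UoZ : U \subset o |: Z.
Hypothesis Z_min : forall Z', Z' \in F -> a \in Z' -> o \notin Z' -> weight Z <= weight Z'.

(* Otherwise x < y, D := o + Z - y avoids x and y so the (x y)-shift fixes F, and then
   exch x y Z is a lighter competitor of Z. *)
Lemma min_weight_initial x y : y \in Z :\: U -> x \notin Z :|: U -> y < x.
Proof.
case/setDP=> yZ yU; rewrite inE negb_or => /andP [xZ xU].
have neq_xy : x != y by apply: contraNneq xZ => ->.
have [//|lt_xy|/val_inj eq_yx] := ltngtP y x; last by rewrite eq_yx eqxx in neq_xy.
pose D := (o |: Z) :\ y.
have DF : D \in F.
  apply: U_saturated.
    have := cardsD1 y (o |: Z); rewrite cardsU1 oZ (kF ZF) (setU1r o yZ).
    by move/eqP; rewrite eqn_add2l => /eqP <-.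
  apply/subsetP => u uU; rewrite /D in_setD1 (subsetP sub_UoZ u uU) andbT.
  by apply: contraNneq yU => <-.
have neq_xo : x != o by apply: contraNneq xU => ->.
have xD : x \notin D by rewrite /D in_setD1 in_setU1 (negbTE neq_xo) (negbTE xZ) andbF.
have yD : y \notin D by rewrite /D !inE eqxx.
have exchZF := shift_fam_stable (shift_fam_fixed_avoid lt_xy DF xD yD) ZF yZ xZ.
have neq_ay : a != y by apply: contraNneq yU => <-.
have a_exch : a \in exch x y Z by rewrite in_exch neq_ay aZ orbT.
have o_exch : o \notin exch x y Z.
  by rewrite in_exch eq_sym (negbTE neq_xo) (negbTE oZ) andbF.
have := leq_add (Z_min exchZF a_exch o_exch) (leqnn y).
by rewrite weight_exch // leq_add2l leqNgt lt_xy.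
Qed.

End MinWeight.

Section TrivialShift.
Variables (i j : 'I_n) (T : {set 'I_n}).
Hypotheses (cardT : #|T| = t) (iT : i \in T) (jT : j \notin T).
Hypothesis coreT : {in shift_fam F i j, forall B, T \subset B}.

Local Notation U := (j |: T).

Lemma core_shift_sub A : A \in F -> T :\ i \subset A.
Proof.
move=> AF; have := coreT (mem_shift_fam i j AF); rewrite shift_setE.
case: (moved F i j A) => /subsetP sub; apply/subsetP => x /setD1P [xi /sub] //.
by rewrite in_exch (negbTE xi) => /andP [].
Qed.

Lemma mem_i_or_j A : A \in F -> (i \in A) || (j \in A).
Proof.
move=> AF; have := coreT (mem_shift_fam i j AF); rewrite shift_setE.
by case: ifP => [/and3P [-> _ _]|_ /subsetP /(_ i iT) ->]; rewrite ?orbT.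
Qed.

Lemma exch_notin A : A \in F -> j \in A -> i \notin A -> exch i j A \notin F.
Proof.
move=> AF jA iA; apply/negP => exchAF; have := coreT (mem_shift_fam i j AF).
by rewrite shift_setE /moved jA iA exchAF /= => /subsetP /(_ i iT); apply/negP.
Qed.

Lemma card_setU1_core l : l \notin T :\ i -> #|l |: (T :\ i)| = t.
Proof. by move=> lT; rewrite cardsU1 lT -cardT (cardsD1 i T) iT. Qed.

Lemma core_saturated D : #|D| = k -> U \subset D -> D \in F.
Proof.
move=> cardD /subsetP UD; apply: F_saturated => // B BF.
have meet l : l \in B -> l \in U -> l \notin T :\ i -> t <= #|D :&: B|.
  move=> lB lU lT; rewrite -(card_setU1_core lT); apply: subset_leq_card.
  apply/subsetP => x /setU1P [->|xT]; rewrite inE; first by rewrite UD.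
  by rewrite UD ?(subsetP (core_shift_sub BF)) ?setU1r ?(subsetP (subD1set T i)).
case/orP: (mem_i_or_j BF) => lB; apply: meet lB _ _; rewrite ?setU11 ?setU1r ?setD11 //.
by rewrite in_setD1 negb_and jT orbT.
Qed.

Lemma card_setI_U Z l l' : Z \in F -> l \in [set i; j] -> l' \in [set i; j] ->
  l \in Z -> l' \notin Z -> #|Z :&: U| = t.
Proof.
move=> ZF lij l'ij lZ l'Z.
have ijU x : x \in [set i; j] -> x \in U by case/set2P => ->; rewrite ?setU11 ?setU1r.
apply/eqP; rewrite eqn_leq; apply/andP; split.
  have <- : #|U :\ l'| = t by have := cardsD1 l' U; rewrite ijU // cardsU1 jT cardT => -[].
  apply: subset_leq_card; apply/subsetP => x /setIP [xZ xU].
  by rewrite in_setD1 xU andbT; apply: contraNneq l'Z => <-.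
have lT : l \notin T :\ i by case/set2P: lij => ->; rewrite ?setD11 // in_setD1 (negbTE jT) andbF.
rewrite -(card_setU1_core lT); apply: subset_leq_card; apply/subsetP => x /setU1P [->|xT].
  by rewrite inE lZ ijU.
by rewrite inE (subsetP (core_shift_sub ZF)) // setU1r // (subsetP (subD1set T i)).
Qed.

Lemma exists_i_notin_j : exists2 A, A \in F & (i \in A) && (j \notin A).
Proof.
have [//|none] := classic (exists2 A, A \in F & (i \in A) && (j \notin A)).
case: ntF; exists (j |: T :\ i); split.
  by apply: card_setU1_core; rewrite in_setD1 (negbTE jT) andbF.
move=> A AF; apply/subsetP => x /setU1P [->|]; last exact: (subsetP (core_shift_sub AF)).
case/orP: (mem_i_or_j AF) => // iA; apply/negPn/negP => jA.
by apply: none; exists A; rewrite ?iA.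
Qed.

Lemma exists_j_notin_i : exists2 C, C \in F & (j \in C) && (i \notin C).
Proof.
have [//|none] := classic (exists2 C, C \in F & (j \in C) && (i \notin C)).
case: ntF; exists T; split=> // A AF; rewrite -(setD1K iT); apply/subsetP => x.
case/setU1P => [->|]; last exact: (subsetP (core_shift_sub AF)).
apply/negPn/negP => iA; apply: none; exists A; rewrite ?iA ?andbT //.
by have := mem_i_or_j AF; rewrite (negbTE iA).
Qed.

Lemma setD_U_neq A C : A \in F -> i \in A -> j \notin A ->
  C \in F -> j \in C -> i \notin C -> A :\: U != C :\: U.
Proof.
move=> AF iA jA CF jC iC; apply/eqP => eqAC.
pose C' := exch i j C.
have [B BF ltB] : exists2 B, B \in F & #|C' :&: B| < t.
  have [//|none] := classic (exists2 B, B \in F & #|C' :&: B| < t).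
  case/negP: (exch_notin CF jC iC); apply: F_saturated; first by rewrite card_exch // (kF CF).
  by move=> B BF; rewrite leqNgt; apply/negP => ltB; apply: none; exists B.
have T'C' : T :\ i \subset C'.
  apply/subsetP => x xT; rewrite in_exch (subsetP (core_shift_sub CF)) // andbT.
  by apply/orP; right; apply: contraNneq jT => <-; move: xT => /setD1P [].
have meet l : l \notin T :\ i -> l \in C' -> l \in B -> t <= #|C' :&: B|.
  move=> lT lC' lB; rewrite -(card_setU1_core lT); apply: subset_leq_card.
  apply/subsetP => x /setU1P [->|xT]; rewrite inE ?lC' ?lB //.
  by rewrite (subsetP T'C') // (subsetP (core_shift_sub BF)).
have iB : i \notin B.
  by apply: contraL ltB => iB; rewrite -leqNgt (meet i) ?setD11 ?mem_exch_i.
have sub_AB : A :&: B \subset T :\ i.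
  apply/subsetP => x /setIP [xA xB]; have [xU|xU] := boolP (x \in U).
    case/setU1P: xU => [xj|xT]; first by move: jA; rewrite -xj xA.
    by rewrite in_setD1 xT andbT; apply: contraNneq iB => <-.
  have : x \in C :\: U by rewrite -eqAC in_setD xU xA.
  case/setDP => xC _; move: ltB; rewrite ltnNge (meet x) //.
    by apply: contra xU => /setD1P [_ xT]; rewrite setU1r.
  by rewrite in_exch xC andbT; apply/orP; right; apply: contraNneq xU => ->; rewrite setU11.
have cardT' : #|T :\ i|.+1 = t by rewrite -cardT (cardsD1 i T) iT.
by have := subset_leq_card sub_AB; rewrite -ltnS cardT' ltnNge (tF AF BF).
Qed.

Lemma trivial_shift_absurd : False.
Proof.
have [A0 A0F /andP [iA0 jA0]] := exists_i_notin_j.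
have [C0 C0F /andP [jC0 iC0]] := exists_j_notin_i.
have [A [[AF iA jA] A_min]] := exists_argmin (@weight n)
  (ex_intro (fun Z => [/\ Z \in F, i \in Z & j \notin Z]) A0 (And3 A0F iA0 jA0)).
have [C [[CF jC iC] C_min]] := exists_argmin (@weight n)
  (ex_intro (fun Z => [/\ Z \in F, j \in Z & i \notin Z]) C0 (And3 C0F jC0 iC0)).
have subU o Z : Z \in F -> i \in o |: Z -> j \in o |: Z -> U \subset o |: Z.
  move=> ZF iZ jZ; apply/subsetP => x /setU1P [-> //|xT].
  have [-> //|xi] := eqVneq x i; apply/setU1r/(subsetP (core_shift_sub ZF)).
  exact/setD1P.
have [iU jU] : i \in U /\ j \in U by rewrite setU11 setU1r.
have A_init := min_weight_initial core_saturated AF iA jA iU jU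
  (subU j A AF (setU1r j iA) (setU11 j A)) (fun Z ZF iZ jZ => A_min Z (And3 ZF iZ jZ)).
have C_init := min_weight_initial core_saturated CF jC iC jU iU
  (subU i C CF (setU11 i C) (setU1r i jC)) (fun Z ZF jZ iZ => C_min Z (And3 ZF jZ iZ)).
have eq_card : #|A :\: U| = #|C :\: U|.
  apply/eqP; rewrite -(eqn_add2l t).
  rewrite -{1}(card_setI_U AF (set21 i j) (set22 i j) iA jA).
  by rewrite -(card_setI_U CF (set22 i j) (set21 i j) jC iC) !cardsID (kF AF) (kF CF).
by case/negP: (setD_U_neq AF iA jA CF jC iC); apply/eqP/eq_setD_initial.
Qed.

End TrivialShift.

Lemma shift_fam_fixed (i j : 'I_n) : i < j -> shift_fam F i j = F.
Proof.
move=> lt_ij; apply/eqP/negPn/negP => neFF.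
have [T [cardT coreT]] := shift_trivial lt_ij neFF.
have neq_ij : i != j by rewrite -val_eqE /= ltn_eqF.
have jT : j \notin T.
  have [A AF mA] := shift_famPn neFF; have := coreT _ (mem_shift_fam i j AF).
  by rewrite shift_setE mA => /subsetP sub; apply: contra (notin_exch_j neq_ij A) => /sub.
exact: trivial_shift_absurd cardT (mem_core_shift_fam neFF cardT coreT) jT coreT.
Qed.

End Extremal.

Theorem corollary2p5 (t k n : nat) :
  2 <= t -> t <= k -> k <= n ->
  (exists G : {set {set 'I_n}},
      k_uniform k G /\ t_intersecting t G /\ nontrivial_fam t G) ->
  exists F : {set {set 'I_n}},
    [/\ k_uniform k F, t_intersecting t F, nontrivial_fam t F,
        left_compressed F &
        forall G : {set {set 'I_n}},
          k_uniform k G -> t_intersecting t G -> nontrivial_fam t G ->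
          co2 k G <= co2 k F].
Proof.
move=> t_ge2 le_tk _ [G0 [kG0 [tG0 ntG0]]].
pose P (G : {set {set 'I_n}}) := [/\ k_uniform k G, t_intersecting t G & nontrivial_fam t G].
have [F1 [PF1 F1_max]] := exists_argmax
  (fun G => co2_subset k (subsetT G)) (ex_intro P G0 (And3 kG0 tG0 ntG0)).
have [F [[[kF tF ntF] co2F] F_min]] := exists_argmin (@weight_fam n)
  (ex_intro (fun G => P G /\ co2 k G = co2 k F1) F1 (conj PF1 erefl)).
have F_max G : P G -> co2 k G <= co2 k F by rewrite co2F; apply: F1_max.
exists F; split=> // [i j lt_ij|G kG tG ntG]; last exact: F_max.
apply: (shift_fam_fixed kF tF ntF) lt_ij => [D cardD DF|x y lt_xy neFF].
  apply/negPn/negP => DnF; have tD : t <= #|D| by rewrite cardD.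
  have := F_max _ (And3 (setU1_uniform kF cardD) (setU1_intersecting tF tD DF)
                        (nontrivial_subset (subsetU1 D F) ntF)).
  by rewrite leqNgt co2_setU1 // (leq_trans _ le_tk) // (leq_trans _ t_ge2).
have [//|ntS] := classic (trivial_fam t (shift_fam F x y)).
have neq_xy : x != y by rewrite -val_eqE /= ltn_eqF.
have PS : P (shift_fam F x y).
  by split=> //; [apply: shift_fam_uniform | apply: shift_fam_intersecting].
have co2S : co2 k (shift_fam F x y) = co2 k F1.
  by apply/eqP; rewrite eqn_leq F1_max // -co2F co2_shift_fam.
by have := F_min _ (conj PS co2S); rewrite leqNgt weight_shift_fam.
Qed.
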